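(* Let $\{\alpha_n\}_{n\ge0}$ be a sequence in the open unit disk $\mathbb{D}$, $\rho_n=\sqrt{1-|\alpha_n|^2}$, and for $z\in\partial\mathbb{D}$ let $S_n(z)=\rho_{n-1}^{-1}\begin{pmatrix} z & -\overline{\alpha_{n-1}}\\ -z\alpha_{n-1} & 1\end{pmatrix}$ ($n\ge1$), $T_n(z)=S_n(z)S_{n-1}(z)\cdots S_1(z)$, $T_0(z)=I$. Define $\begin{pmatrix}\varphi_n(z)\\ \varphi_n^\dagger(z)\end{pmatrix}=T_n(z)\begin{pmatrix}1\\1\end{pmatrix}$ and $\begin{pmatrix}\psi_n(z)\\ \psi_n^\dagger(z)\end{pmatrix}=T_n(z)\begin{pmatrix}1\\-1\end{pmatrix}$. Let $z,z'\in\partial\mathbb{D}$ and let $\vec w_n=\begin{pmatrix}w_n\\ w_n^\dagger\end{pmatrix}=T_n(z)\vec w_0$ and $\vec w'_n=\begin{pmatrix}w'_n\\ w'^\dagger_n\end{pmatrix}=T_n(z')\vec w'_0$ with $\vec w_0=\vec w'_0$. Then for every $n\ge0$, $$w'_n=w_n+(z'-z)\sum_{m=0}^{n-1}\frac{1}{2z^{m+1}}\big(\varphi_m^\dagger(z)\psi_n(z)-\varphi_n(z)\psi_m^\dagger(z)\big)w'_m$$ and $$w'^\dagger_n=w_n^\dagger+(z'-z)\sum_{m=0}^{n-1}\frac{1}{2z^{m+1}}\big(\varphi_m^\dagger(z)\psi_n^\dagger(z)-\varphi_n^\dagger(z)\psi_m^\dagger(z)\big)w'_m.$$ *)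

From HB Require Import structures.
From mathcomp Require Import all_boot all_order all_algebra.
From mathcomp Require Import complex.
Set Implicit Arguments. Unset Strict Implicit. Unset Printing Implicit Defensive.
Import Order.TTheory GRing.Theory Num.Theory.
Local Open Scope ring_scope.

Section Szego.
Variable R : rcfType.
Local Notation C := (R[i]).

Definition rho (a : C) : C := sqrtC (1 - `|a| ^+ 2).

Definition mx2 (a b c d : C) : 'M[C]_2 :=
  \matrix_(i < 2, j < 2)
    if i == ord0 then (if j == ord0 then a else b) else (if j == ord0 then c else d).
Definition col2 (a b : C) : 'cV[C]_2 := \col_(i < 2) (if i == ord0 then a else b).

Definition Smat (alpha : nat -> C) (n : nat) (z : C) : 'M[C]_2 :=
  (rho (alpha n.-1))^-1 *: mx2 z (- (alpha n.-1)^*) (- z * alpha n.-1) 1.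

Fixpoint Tmat (alpha : nat -> C) (n : nat) (z : C) : 'M[C]_2 :=
  match n with
  | 0 => 1%:M
  | m.+1 => Smat alpha m.+1 z *m Tmat alpha m z
  end.

Definition top (v : 'cV[C]_2) : C := v ord0 ord0.
Definition bot (v : 'cV[C]_2) : C := v ord_max ord0.

Definition phi  alpha n z := top (Tmat alpha n z *m col2 1 1).
Definition phid alpha n z := bot (Tmat alpha n z *m col2 1 1).
Definition psi  alpha n z := top (Tmat alpha n z *m col2 1 (-1)).
Definition psid alpha n z := bot (Tmat alpha n z *m col2 1 (-1)).

End Szego.

(* Variation of constants.  S_k(z') v = S_k(z) v + ((z' - z) / z) v_1 S_k(z) e_1, so
   iterating the recursion at z' and comparing with the one at z gives
   w'_n = w_n + ((z' - z) / z) sum_(m < n) w'_m,1 T_n(z) T_(m+1)(z)^-1 S_(m+1)(z) e_1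
        = w_n + ((z' - z) / z) sum_(m < n) w'_m,1 T_n(z) T_m(z)^-1 e_1.
   Since det S_k(z) = z, the Wronskian of the solutions (phi, phi^+) and (psi, psi^+) is
   -2 z^m, and Cramer's rule gives
   T_m(z)^-1 e_1 = (2 z^m)^-1 (phi^+_m (1, -1) - psi^+_m (1, 1)). *)
From HB Require Import structures.
From mathcomp Require Import all_boot all_order all_algebra.
From mathcomp Require Import complex ring.
Import Order.TTheory GRing.Theory Num.Theory.
Local Open Scope ring_scope.

Lemma det_mx22 (K : comPzRingType) (M : 'M[K]_2) :
  \det M = M ord0 ord0 * M ord_max ord_max - M ord0 ord_max * M ord_max ord0.
Proof.
rewrite (expand_det_row _ ord0) !big_ord_recl big_ord0 addr0 /cofactor.
rewrite !det_mx11 !mxE /= expr0 expr1 mul1r mulN1r mulrN.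
by congr (_ * _ - _ * _); congr (M _ _); apply/val_inj.
Qed.

Section Transfer.
Variable R : rcfType.
Local Notation C := (R[i]).
Implicit Types (M : 'M[C]_2) (u v : 'cV[C]_2) (alpha : nat -> C).

Lemma top_mulmx M v : top (M *m v) = M ord0 ord0 * top v + M ord0 ord_max * bot v.
Proof.
rewrite /top /bot mxE !big_ord_recl big_ord0 addr0.
by congr (_ * _ + M _ _ * v _ _); apply/val_inj.
Qed.

Lemma bot_mulmx M v : bot (M *m v) = M ord_max ord0 * top v + M ord_max ord_max * bot v.
Proof.
rewrite /top /bot mxE !big_ord_recl big_ord0 addr0.
by congr (_ * _ + M _ _ * v _ _); apply/val_inj.
Qed.

Lemma cV2P u v : top u = top v -> bot u = bot v -> u = v.
Proof.
move=> eq_top eq_bot; apply/matrixP => i j; rewrite (ord1 j).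
case: i => [[|[|//]] ltn_i2].
- by rewrite (_ : Ordinal ltn_i2 = ord0) //; apply/val_inj.
- by rewrite (_ : Ordinal ltn_i2 = ord_max) //; apply/val_inj.
Qed.

Lemma top_col2 (a b : C) : top (col2 a b) = a. Proof. by rewrite /top mxE. Qed.
Lemma bot_col2 (a b : C) : bot (col2 a b) = b. Proof. by rewrite /bot mxE. Qed.
Lemma topD u v : top (u + v) = top u + top v. Proof. by rewrite /top mxE. Qed.
Lemma botD u v : bot (u + v) = bot u + bot v. Proof. by rewrite /bot mxE. Qed.
Lemma topB u v : top (u - v) = top u - top v. Proof. by rewrite /top !mxE. Qed.
Lemma botB u v : bot (u - v) = bot u - bot v. Proof. by rewrite /bot !mxE. Qed.
Lemma topZ k v : top (k *: v) = k * top v. Proof. by rewrite /top mxE. Qed.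
Lemma botZ k v : bot (k *: v) = k * bot v. Proof. by rewrite /bot mxE. Qed.
Lemma top_sum n (F : 'I_n -> 'cV[C]_2) : top (\sum_(m < n) F m) = \sum_(m < n) top (F m).
Proof. by rewrite /top summxE. Qed.
Lemma bot_sum n (F : 'I_n -> 'cV[C]_2) : bot (\sum_(m < n) F m) = \sum_(m < n) bot (F m).
Proof. by rewrite /bot summxE. Qed.

Definition wronskian u v : C := top u * bot v - bot u * top v.

Lemma wronskian_mulmx M u v :
  wronskian (M *m u) (M *m v) = \det M * wronskian u v.
Proof. by rewrite /wronskian det_mx22 !top_mulmx !bot_mulmx; ring. Qed.

Lemma mulmx_cross_bot M u v :
  M *m (bot (M *m u) *: v - bot (M *m v) *: u) = wronskian (M *m v) (M *m u) *: col2 1 0.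
Proof.
rewrite mulmxBr -!scalemxAr.
apply: cV2P; rewrite ?topB ?botB !(topZ, botZ) ?top_col2 ?bot_col2 /wronskian; ring.
Qed.

Lemma rho_sqr (a : C) : rho a ^+ 2 = 1 - a * a^*.
Proof. by rewrite /rho sqrtCK -normCK. Qed.

Lemma rho_neq0 (a : C) : `|a| < 1 -> rho a != 0.
Proof.
move=> lt_a1; rewrite /rho sqrtC_eq0 subr_eq0 eq_sym lt_eqF //.
by rewrite expr_lt1 ?normr_ge0.
Qed.

Lemma det_Smat alpha k z : `|alpha k.-1| < 1 -> \det (Smat alpha k z) = z.
Proof.
move=> /rho_neq0 rho_neq0; rewrite /Smat detZ det_mx22 /mx2 !mxE /= exprVn.
rewrite -[z in RHS](mulKf (expf_neq0 2 rho_neq0)) rho_sqr; congr (_ * _); ring.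
Qed.

Lemma det_Tmat alpha n z : (forall k, `|alpha k| < 1) -> \det (Tmat alpha n z) = z ^+ n.
Proof.
move=> lt_alpha1; elim: n => [|n IHn] /=; first by rewrite det1.
by rewrite det_mulmx det_Smat // IHn exprS.
Qed.

Lemma Smat_shift alpha k (z z' : C) v : z != 0 ->
  Smat alpha k z' *m v =
  Smat alpha k z *m v + ((z' - z) / z * top v) *: (Smat alpha k z *m col2 1 0).
Proof.
rewrite /Smat; move: (rho _)^-1 => r z_neq0; apply: cV2P;
  rewrite ?topD ?botD ?topZ ?botZ ?top_mulmx ?bot_mulmx ?top_col2 ?bot_col2 /mx2 !mxE /=;
  by field.
Qed.

Section Variation.
Variables (alpha : nat -> C) (z z' : C) (w0 : 'cV[C]_2).
Hypotheses (lt_alpha1 : forall k, `|alpha k| < 1) (z_neq0 : z != 0).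

Definition green m : 'cV[C]_2 :=
  phid alpha m z *: col2 1 (-1) - psid alpha m z *: col2 1 1.

Lemma Tmat_green m : Tmat alpha m z *m green m = (2 * z ^+ m) *: col2 1 0.
Proof.
rewrite mulmx_cross_bot wronskian_mulmx det_Tmat // /wronskian.
by rewrite !top_col2 !bot_col2 mulrC; congr (_ * _ *: _); ring.
Qed.

Lemma top_Tmat_green n m :
  top (Tmat alpha n z *m green m) =
  phid alpha m z * psi alpha n z - psid alpha m z * phi alpha n z.
Proof. by rewrite mulmxBr -!scalemxAr topB !topZ. Qed.

Lemma bot_Tmat_green n m :
  bot (Tmat alpha n z *m green m) =
  phid alpha m z * psid alpha n z - psid alpha m z * phid alpha n z.
Proof. by rewrite mulmxBr -!scalemxAr botB !botZ. Qed.

Lemma Tmat_variation n :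
  Tmat alpha n z' *m w0 = Tmat alpha n z *m w0 +
    \sum_(m < n) ((z' - z) / (2 * z ^+ m.+1) * top (Tmat alpha m z' *m w0)) *:
                 (Tmat alpha n z *m green m).
Proof.
elim: n => [|n IHn]; first by rewrite big_ord0 addr0.
rewrite /= -!mulmxA (Smat_shift _ _ _ _ _ z_neq0) {1}IHn.
rewrite mulmxDr mulmx_sumr big_ord_recr /= -addrA.
congr (_ + (_ + _)); first by apply: eq_bigr => m _; rewrite -scalemxAr mulmxA.
rewrite -mulmxA Tmat_green -scalemxAr scalerA; congr (_ *: _).
have zn_neq0 : z ^+ n != 0 by rewrite expf_neq0.
by rewrite exprS; field; rewrite zn_neq0 z_neq0.
Qed.

End Variation.
End Transfer.

Theorem mainTheorem3 (R : rcfType) (alpha : nat -> R[i])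
  (Halpha : forall n, `|alpha n| < 1)
  (z z' : R[i]) (Hz : `|z| = 1) (Hz' : `|z'| = 1)
  (w0 : 'cV[R[i]]_2) (n : nat) :
  let w  := fun m => Tmat alpha m z  *m w0 in
  let w' := fun m => Tmat alpha m z' *m w0 in
  top (w' n) = top (w n) + (z' - z) * \sum_(m < n)
      (2 * z ^+ m.+1)^-1 *
      (phid alpha m z * psi alpha n z - phi alpha n z * psid alpha m z) * top (w' m)
  /\
  bot (w' n) = bot (w n) + (z' - z) * \sum_(m < n)
      (2 * z ^+ m.+1)^-1 *
      (phid alpha m z * psid alpha n z - phid alpha n z * psid alpha m z) * top (w' m).
Proof.
move=> w w'.
have z_neq0 : z != 0 by rewrite -normr_eq0 Hz oner_neq0.
rewrite /w' (Tmat_variation _ _ _ z' w0 Halpha z_neq0) topD botD top_sum bot_sum !big_distrr.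
split; congr (_ + _); apply: eq_bigr => m _ /=.
- by rewrite topZ top_Tmat_green; ring.
- by rewrite botZ bot_Tmat_green; ring.
Qed.
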